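(* Let $F$ be a field, $M$ an $F$-algebra and $B$ a separable $F$-subalgebra of $M$. Then every first-order deformation $\varphi:B\to M$ is given by conjugation: there exists an invertible $a\in M$ such that $\varphi(b)=aba^{-1}$ for every $b\in B$. In particular, any such deformation extends to an automorphism of $M$ and fixes $B\cap Z(M)$ pointwise.
   Context: A first-order deformation of a subalgebra $B\subseteq M$ is an $F$-linear map $\varphi:B\to M$ such that $\delta=\varphi-\mathrm{id}$ satisfies $\delta(bc)=\delta(b)c+b\delta(c)$ and $\delta(b)\delta(c)=0$ for all $b,c\in B$. $B$ is separable if it admits a separating idempotent $e\in B\otimes_F B$ (image $1$ under multiplication and $(b\otimes1)e=e(1\otimes b)$ for all $b\in B$), equivalently $B$ is semisimple with étale center. $Z(M)$ is the center of $M$. *)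

From HB Require Import structures.
From mathcomp Require Import all_boot all_order all_algebra.
Set Implicit Arguments. Unset Strict Implicit. Unset Printing Implicit Defensive.
Import GRing.Theory.
Local Open Scope ring_scope.

(* F : fieldType, M : algType F (associative unital F-algebra,
   not necessarily commutative nor finite-dimensional).  A subalgebra B of M is
   represented by a predicate on M. *)

Section Defs.
Variables (F : fieldType) (M : algType F).

Definition is_subalgebra (B : {pred M}) : Prop :=
  [/\ 1 \in B,
      forall x y, x \in B -> y \in B -> x + y \in B,
      forall (k : F) x, x \in B -> k *: x \in B &
      forall x y, x \in B -> y \in B -> x * y \in B].

Definition bilinear_on (B : {pred M}) (V : lmodType F) (beta : M -> M -> V) : Prop :=
  (forall (k : F) x x' y, x \in B -> x' \in B -> y \in B ->
     beta (k *: x + x') y = k *: beta x y + beta x' y) /\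
  (forall (k : F) x y y', x \in B -> y \in B -> y' \in B ->
     beta x (k *: y + y') = k *: beta x y + beta x y').

(* Equality in B (x)_F B of the two tensors  sum_{p in s} p.1 (x) p.2  and
   sum_{p in t} p.1 (x) p.2  (all components lying in B), via the universal
   property of the tensor product: every F-bilinear map out of B x B agrees. *)
Definition tensor_eq (B : {pred M}) (s t : seq (M * M)) : Prop :=
  forall (V : lmodType F) (beta : M -> M -> V), bilinear_on B beta ->
    \sum_(p <- s) beta p.1 p.2 = \sum_(p <- t) beta p.1 p.2.

(* e = sum_i x_i (x) y_i  is a separating idempotent of B:
   mult(e) = 1 and (b (x) 1) e = e (1 (x) b) for all b in B. *)
Definition separating_idempotent (B : {pred M}) (e : seq (M * M)) : Prop :=
  [/\ all (fun p => (p.1 \in B) && (p.2 \in B)) e,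
      \sum_(p <- e) p.1 * p.2 = 1 &
      forall b, b \in B ->
        tensor_eq B [seq (b * p.1, p.2) | p <- e] [seq (p.1, p.2 * b) | p <- e]].

Definition separable_subalgebra (B : {pred M}) : Prop :=
  is_subalgebra B /\ exists e, separating_idempotent B e.

(* phi : B -> M (represented as a function on M; only its values on B matter)
   is a first-order deformation: phi is F-linear on B and delta = phi - id
   satisfies delta(bc) = delta(b)c + b delta(c) and delta(b)delta(c) = 0. *)
Definition first_order_deformation (B : {pred M}) (phi : M -> M) : Prop :=
  let delta := fun x => phi x - x in
  [/\ forall (k : F) b c, b \in B -> c \in B -> phi (k *: b + c) = k *: phi b + phi c,
      forall b c, b \in B -> c \in B -> delta (b * c) = delta b * c + b * delta c &
      forall b c, b \in B -> c \in B -> delta b * delta c = 0].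

Definition is_alg_automorphism (psi : M -> M) : Prop :=
  [/\ forall (k : F) x y, psi (k *: x + y) = k *: psi x + psi y,
      forall x y, psi (x * y) = psi x * psi y,
      psi 1 = 1 & bijective psi].

End Defs.

(* A separating idempotent e = sum_i x_i (x) y_i makes every derivation
   d : B -> M inner: d b = w b - b w with w = sum_i d(x_i) y_i.  When moreover
   d(b) d(c) = 0, the element w satisfies w B w = 0, so w^2 = 0, 1 + w is a unit
   with inverse 1 - w, and (1 + w) b (1 - w) = b + (w b - b w) = b + d b. *)

From HB Require Import structures.
From mathcomp Require Import all_boot all_order all_algebra.
Import GRing.Theory.
Local Open Scope ring_scope.

Section SquareZeroConjugation.
Variables (R : pzRingType) (w : R).
Hypothesis w2_eq0 : w * w = 0.

Lemma mul_1addr_1subr : (1 + w) * (1 - w) = 1.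
Proof. by rewrite mulrDl mul1r mulrBr mulr1 w2_eq0 subr0 subrK. Qed.

Lemma mul_1subr_1addr : (1 - w) * (1 + w) = 1.
Proof. by rewrite mulrBl mul1r mulrDr mulr1 w2_eq0 addr0 addrK. Qed.

End SquareZeroConjugation.

Lemma conj_1addr_sandwich0 (R : pzRingType) (w b : R) :
  w * b * w = 0 -> (1 + w) * b * (1 - w) = b + (w * b - b * w).
Proof.
move=> wbw0; rewrite mulrDl mul1r mulrDl !mulrBr !mulr1 wbw0 subr0.
by rewrite addrAC -addrA.
Qed.

Lemma conj_is_alg_automorphism (F : fieldType) (M : algType F) (a a' : M) :
  a * a' = 1 -> a' * a = 1 -> is_alg_automorphism (fun m => a * m * a').
Proof.
move=> aa' a'a; split=> [k x y | x y | | ].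
- by rewrite mulrDr mulrDl -scalerAr -scalerAl.
- by rewrite !mulrA -(mulrA _ a' a) a'a mulr1.
- by rewrite mulr1.
- exists (fun m => a' * m * a) => m.
    by rewrite !mulrA a'a mul1r -mulrA a'a mulr1.
  by rewrite !mulrA aa' mul1r -mulrA aa' mulr1.
Qed.

Definition inner_witness (F : fieldType) (M : algType F) (e : seq (M * M))
  (d : M -> M) : M := \sum_(p <- e) d p.1 * p.2.
Arguments inner_witness {F M}.

Section SeparableDerivation.
Context {F : fieldType} {M : algType F} {B : {pred M}} {e : seq (M * M)}.
Hypothesis sepB : separating_idempotent B e.
Context {d : M -> M}.
Hypothesis d_linear :
  forall (k : F) x y, x \in B -> y \in B -> d (k *: x + y) = k *: d x + d y.
Hypothesis d_leibniz :
  forall b c, b \in B -> c \in B -> d (b * c) = d b * c + b * d c.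

Local Notation w := (inner_witness e d).

Lemma mem_idempotent_factors p : p \in e -> p.1 \in B /\ p.2 \in B.
Proof. by case: sepB => /allP alle _ _ /alle /andP. Qed.

Lemma separable_derivation_inner b :
  b \in B -> d b = w * b - b * w.
Proof.
move=> Bb; case: sepB => _ sum1 teq.
have bil : bilinear_on B (fun x y => d x * y).
  split=> k x x' y Bx Bx' By; first by rewrite d_linear // mulrDl -scalerAl.
  by rewrite mulrDr -scalerAr.
have := teq b Bb M _ bil; rewrite !big_map /=.
have -> : \sum_(p <- e) d (b * p.1) * p.2 = d b + b * w.
  rewrite mulr_sumr -[d b]mulr1 -sum1 mulr_sumr -big_split /=.
  apply: eq_big_seq => p /mem_idempotent_factors [Bp1 _].
  by rewrite d_leibniz // mulrDl !mulrA.
have -> : \sum_(p <- e) d p.1 * (p.2 * b) = w * b.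
  by rewrite mulr_suml; apply: eq_bigr => p _; rewrite mulrA.
by move <-; rewrite addrK.
Qed.

Hypothesis mulB : forall x y, x \in B -> y \in B -> x * y \in B.
Hypothesis d_mul_eq0 : forall b c, b \in B -> c \in B -> d b * d c = 0.

Lemma derivation_mul_inner_witness x : x \in B -> d x * w = 0.
Proof.
move=> Bx; rewrite mulr_sumr big_seq big1 // => p /mem_idempotent_factors [Bp1 _].
by rewrite mulrA d_mul_eq0 // mul0r.
Qed.

Lemma derivation_mulr_inner_witness x z :
  x \in B -> z \in B -> d x * z * w = 0.
Proof.
move=> Bx Bz.
have zw : z * w = w * z - d z.
  by rewrite separable_derivation_inner // opprB addrCA subrr addr0.
by rewrite -mulrA zw mulrBr mulrA derivation_mul_inner_witness // mul0r
  d_mul_eq0 // subrr.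
Qed.

Lemma inner_witness_sandwich b : b \in B -> w * b * w = 0.
Proof.
move=> Bb; rewrite {1}/inner_witness !mulr_suml big_seq big1 // => p.
move=> /mem_idempotent_factors [Bp1 Bp2].
by rewrite -(mulrA _ p.2 b) derivation_mulr_inner_witness // mulB.
Qed.

End SeparableDerivation.

Lemma first_order_deformation_conj {F : fieldType} {M : algType F}
    {B : {pred M}} {phi : M -> M} :
  separable_subalgebra B -> first_order_deformation B phi ->
  exists a a' : M,
    [/\ a * a' = 1, a' * a = 1 & forall b, b \in B -> phi b = a * b * a'].
Proof.
move=> [[B1 _ _ mulB] [e sepB]] [phi_lin d_leibniz d_mul_eq0].
pose d x := phi x - x.
have d_linear (k : F) x y : x \in B -> y \in B -> d (k *: x + y) = k *: d x + d y.
  by move=> Bx By; rewrite /d phi_lin // opprD addrACA scalerBr.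
pose w := inner_witness e d.
have wbw b : b \in B -> w * b * w = 0.
  exact: (inner_witness_sandwich sepB d_linear d_leibniz mulB d_mul_eq0).
have w2_eq0 : w * w = 0 by rewrite -[w in w * _]mulr1 wbw.
exists (1 + w), (1 - w); split; [exact: mul_1addr_1subr | exact: mul_1subr_1addr |].
move=> b Bb; rewrite conj_1addr_sandwich0 ?wbw //.
by rewrite -(separable_derivation_inner sepB d_linear d_leibniz) // /d addrC subrK.
Qed.

Theorem theorem4p6 (F : fieldType) (M : algType F) (B : {pred M}) (phi : M -> M) :
  separable_subalgebra B ->
  first_order_deformation B phi ->
  (exists a a' : M,
      [/\ a * a' = 1, a' * a = 1 &
          forall b, b \in B -> phi b = a * b * a'])
  /\ (exists psi : M -> M,
        is_alg_automorphism psi /\ forall b, b \in B -> psi b = phi b)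
  /\ (forall b, b \in B -> (forall m : M, b * m = m * b) -> phi b = b).
Proof.
move=> sepB defphi.
have [a [a' [aa' a'a phi_conj]]] := first_order_deformation_conj sepB defphi.
split; first by exists a, a'.
split.
  exists (fun m => a * m * a'); split; first exact: conj_is_alg_automorphism.
  by move=> b Bb; rewrite phi_conj.
by move=> b Bb central; rewrite phi_conj // -mulrA central mulrA aa' mul1r.
Qed.
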